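(* Let $n$ be even and $F\colon\mathbb F_2^n\to\mathbb F_2^n$ a quadratic APN function with linearity $2^{\frac{n+k}{2}}$, and assume $F$ has a component function with amplitude $2^{\frac{n+\ell}{2}}$ where $2\le\ell<n-k$ and $\ell\ne k$. Then $|N_F|\ge 2^k+2^\ell+1$.
   Context: $\langle\cdot,\cdot\rangle$ is the standard dot product. $F$ is APN if for every $a\ne0$ and $c$, $F(x)+F(x+a)=c$ has at most 2 solutions; quadratic if each component $F_b(x)=\langle b,F(x)\rangle$ is a quadratic form plus an affine function. $W_F(b,a)=\sum_x(-1)^{F_b(x)+\langle x,a\rangle}$; linearity $L(F)=\max_{a,\,b\ne0}|W_F(b,a)|$. For quadratic $F$ and fixed $b$ there is $k'$ with $|W_F(b,a)|\in\{0,2^{(n+k')/2}\}$ for all $a$; $2^{(n+k')/2}$ is the amplitude of $F_b$; $F_b$ is bent if its amplitude is $2^{n/2}$. $N_F=\{b\in\mathbb F_2^n\setminus\{0\}\colon F_b\text{ not bent}\}$. *)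

From HB Require Import structures.
From mathcomp Require Import all_boot all_order all_algebra.
Set Implicit Arguments. Unset Strict Implicit. Unset Printing Implicit Defensive.
Import Order.TTheory GRing.Theory Num.Theory.
Local Open Scope ring_scope.

Notation vec n := 'rV['F_2]_n.

Definition dot n (x y : vec n) : 'F_2 := \sum_(i < n) x ord0 i * y ord0 i.

Definition comp n (F : vec n -> vec n) (b : vec n) (x : vec n) : 'F_2 :=
  dot b (F x).

Definition APN n (F : vec n -> vec n) : Prop :=
  forall a c : vec n, a != 0 ->
    (#|[set x : vec n | (F x + F (x + a) == c)%R]| <= 2)%N.

Definition quadratic_plus_affine n (f : vec n -> 'F_2) : Prop :=
  exists (A : 'M['F_2]_n) (c : vec n) (d : 'F_2),
    forall x, f x = (x *m A *m x^T) ord0 ord0 + dot c x + d.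

Definition quadratic n (F : vec n -> vec n) : Prop :=
  forall b : vec n, quadratic_plus_affine (comp F b).

Definition sgn (v : 'F_2) : int := if v == 0 then 1 else -1.

Definition walsh n (F : vec n -> vec n) (b a : vec n) : int :=
  \sum_(x : vec n) sgn (comp F b x + dot x a).

Definition linearity n (F : vec n -> vec n) : nat :=
  \max_(b : vec n | b != 0) \max_(a : vec n) `|walsh F b a|%N.

(* amplitude of F_b: the common nonzero value of |W_F(b,a)| (quadratic F),
   i.e. the maximum over a of |W_F(b,a)| *)
Definition amplitude n (F : vec n -> vec n) (b : vec n) : nat :=
  \max_(a : vec n) `|walsh F b a|%N.

(* F_b bent iff amplitude = 2^(n/2), i.e. amplitude^2 = 2^n *)
Definition bent_comp n (F : vec n -> vec n) (b : vec n) : bool :=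
  (amplitude F b ^ 2 == 2 ^ n)%N.

Definition NF n (F : vec n -> vec n) : {set vec n} :=
  [set b | (b != 0) && ~~ bent_comp F b].

From Pilot Require Import Defs.
From mathcomp Require Import all_boot all_order all_algebra.
From mathcomp Require Import zify ring.
Set Implicit Arguments. Unset Strict Implicit. Unset Printing Implicit Defensive.
Import Order.TTheory GRing.Theory Num.Theory.
Local Open Scope ring_scope.

(* For quadratic F, the square of each Walsh coefficient W_F(b,a) is 0 or 2^n |V_b|,
   where V_b = rad F b is the radical of the polar form of F_b; so F_b has amplitude
   2^((n + dim V_b)/2) and is bent iff V_b = 0. For a quadratic APN function every
   nonzero a lies in V_b for exactly one nonzero b, i.e. the radicals partition the
   nonzero vectors. Let V_b0, V_b1 have sizes 2^l and 2^k with k + l < n. Then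
   S = V_b0 + V_b1 is a proper subspace; a coset x + S <> S is covered by radicals
   not contained in S, each meeting it in as many points as it meets S. Counting the
   points of S and of x + S gives at least |V_b0| + |V_b1| - 1 such radicals, all
   nontrivial, hence |N_F| >= 2^k + 2^l + 1. *)

Lemma pchar_F2 : 2%N \in [pchar 'F_2].
Proof. exact: pchar_Fp. Qed.

Lemma addrr_F2 (V : lmodType 'F_2) (v : V) : v + v = 0.
Proof. by rewrite -[v]scale1r -scalerDl (addrr_pchar2 pchar_F2) scale0r. Qed.

Lemma oppr_F2 (V : lmodType 'F_2) (v : V) : - v = v.
Proof. by apply/eqP; rewrite eq_sym -subr_eq0 opprK addrr_F2. Qed.

(* Lets [ring], which knows nothing about the characteristic, prove identities in
   'F_2 once the difference of the two sides is supplied as an even term. *)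
Lemma eq_F2_mod2 (x y z : 'F_2) : x = y + z *+ 2 -> x = y.
Proof. by rewrite mulr2n (addrr_pchar2 pchar_F2) addr0. Qed.

Lemma sgnD (u v : 'F_2) : sgn (u + v) = sgn u * sgn v.
Proof. by case: u v => [[|[|]]] // ? [[|[|]]]. Qed.

Section CharacterSums.

Variable V : finZmodType.

Lemma sum_sgn_additive (P : {set V}) (g : V -> 'F_2) :
  zmod_closed P -> {in P &, {morph g : u v / u + v}} ->
  \sum_(u in P) sgn (g u) = if [forall u in P, g u == 0] then #|P|%:Z else 0.
Proof.
move=> P_closed gD; case: ifP => [/forall_inP g0 | /negbT/forall_inPn [u0 Pu0 gu0]].
  by rewrite (eq_bigr (fun=> 1)) ?sumr_const ?natz // => u /g0/eqP ->.
have gu0_1 : g u0 = 1 by move: (g u0) gu0 => [[|[|]]] // ? _; apply/val_inj.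
have [[_ PD] PN] := (GRing.zmod_closedD P_closed, GRing.zmod_closedN P_closed).
have P_shift u : (u0 + u \in P) = (u \in P).
  apply/idP/idP => [Pu0u|Pu]; last exact: PD.
  by rewrite -(addKr u0 u) PD ?PN.
set s := \sum_(u in P) _; suff : s = - s by lia.
rewrite {1}/s (reindex_inj (addrI u0)) /= (eq_bigl _ _ P_shift) -sumrN.
by apply: eq_bigr => u Pu; rewrite gD // gu0_1 sgnD mulN1r.
Qed.

Lemma sum_sgn_additiveT (g : V -> 'F_2) : {morph g : u v / u + v} ->
  \sum_u sgn (g u) = if [forall u, g u == 0] then #|V|%:Z else 0.
Proof.
move=> gD; have := @sum_sgn_additive [set: V] g _ (in2W gD).
rewrite cardsT (eq_bigl _ _ (@in_setT V)); move->.
- by congr (if _ then _ else _); apply: eq_forallb => u; rewrite in_setT.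
by split=> [|u v _ _]; rewrite in_setT.
Qed.

End CharacterSums.

Section SubgroupPartition.

Variable V : finZmodType.

Lemma card_setI_coset (G S : {set V}) x0 y0 :
  zmod_closed G -> zmod_closed S -> y0 \in G -> y0 - x0 \in S ->
  #|G :&: [set y | y - x0 \in S]| = #|G :&: S|.
Proof.
move=> G_closed S_closed Gy0 Sy0.
have [[_ GD] GB] := (GRing.zmod_closedD G_closed, G_closed.2).
have [[_ SD] SB] := (GRing.zmod_closedD S_closed, S_closed.2).
rewrite -(card_imset (G :&: S) (addIr y0)); apply: eq_card => y; rewrite !inE.
apply/andP/imsetP => [[Gy Sy] | [s /setIP [Gs Ss] ->]].
  exists (y - y0); last by rewrite subrK.
  apply/setIP; split; first exact: GB.
  by rewrite -[y - y0](addrKA (- x0)) [- x0 + y0]addrC SB.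
by split; rewrite ?GD // -addrA SD.
Qed.

Lemma zmod_closed_sumset (U W : {set V}) : zmod_closed U -> zmod_closed W ->
  zmod_closed [set u.1 + u.2 | u in setX U W].
Proof.
move=> [U0 UB] [W0 WB]; split.
  by apply/imsetP; exists (0, 0); rewrite ?inE ?U0 ?W0 ?addr0.
move=> _ _ /imsetP [[u w] /setXP [/= Uu Ww] ->] /imsetP [[u' w'] /setXP [/= Uu' Ww'] ->].
apply/imsetP; exists (u - u', w - w'); first by rewrite inE /= UB ?WB.
by rewrite /= opprD addrACA.
Qed.

Variables (I : finType) (D : {set I}) (H : I -> {set V}).
Hypothesis H_closed : forall i, zmod_closed (H i).
Hypothesis H_partition : forall a, a != 0 -> #|[set i in D | a \in H i]| = 1%N.

Lemma sum_card_partition (Y : {set V}) : 0 \notin Y ->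
  (\sum_(i in D) #|H i :&: Y| = #|Y|)%N.
Proof.
move=> Y0.
have cardI (T : finType) (A B : {set T}) : #|A :&: B| = (\sum_(x in B) (x \in A))%N.
  rewrite -sum1_card (eq_bigl (fun x => (x \in B) && (x \in A))) ?big_mkcondr //.
  by move=> x; rewrite inE andbC.
under eq_bigr do rewrite cardI.
rewrite exchange_big -sum1_card; apply: eq_bigr => y Yy.
rewrite -(H_partition (a := y)); last by apply: contraNneq Y0 => <-.
by rewrite setIdE setIC cardI; apply: eq_bigr => i _; rewrite inE.
Qed.

Lemma sum_card_coset (S : {set V}) x0 : zmod_closed S -> x0 \notin S ->
  #|S| = (\sum_(i in D | H i :&: [set y | (y - x0)%R \in S] != set0) #|H i :&: S|)%N.
Proof.
move=> S_closed Sx0; set E := [set y | y - x0 \in S].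
have E0 : 0 \notin E.
  by rewrite inE add0r; apply: contra Sx0 => /(GRing.zmod_closedN S_closed); rewrite opprK.
have -> : #|S| = #|E| by apply/esym/card_preimset/addIr.
rewrite -(sum_card_partition E0) (bigID (fun i => H i :&: E != set0)) /=.
rewrite [X in (_ + X)%N]big1 ?addn0 => [|i /andP [_ /negPn /eqP ->]]; last exact: cards0.
apply: eq_bigr => i /andP [_ /set0Pn [y /setIP [Hy Ey]]]; rewrite inE in Ey.
exact: card_setI_coset (H_closed i) S_closed Hy Ey.
Qed.

Lemma sum_card_parts_lt (S : {set V}) : zmod_closed S -> S != [set: V] ->
  (\sum_(i in D | H i \subset S) (#|H i|).-1
     < #|[set i in D | ~~ (H i \subset S)]|)%N.
Proof.
move=> S_closed S_proper; have [S0 SB] := S_closed.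
have [x0 Sx0] : exists x0, x0 \notin S.
  apply/existsP; apply: contraNT S_proper => /existsPn S_full.
  by apply/eqP/setP => x; rewrite in_setT; apply/negPn/S_full.
pose E := [set y | y - x0 \in S]; pose M := [set i in D | H i :&: E != set0].
pose c i := #|H i :&: (S :\ 0)|.
have cardIS i : #|H i :&: S| = (c i).+1.
  by rewrite (cardsD1 0) inE (H_closed i).1 S0 -setIDA.
have cardS : #|S| = (\sum_(i in M) c i + #|M|)%N.
  rewrite (sum_card_coset S_closed Sx0) -/E -sum1_card -big_split /=.
  by apply: eq_big => [i | i _]; rewrite ?inE // cardIS addn1.
have M_sub : M \subset [set i in D | ~~ (H i \subset S)].
  apply/subsetP => i; rewrite !inE => /andP [-> /set0Pn [y /setIP [Hy Ey]]].
  apply: contra Sx0 => /subsetP /(_ y Hy) Sy; rewrite inE in Ey.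
  by rewrite -[x0](subKr y) SB.
have sum_c : (\sum_(i in D) c i = #|S|.-1)%N.
  by rewrite sum_card_partition ?(cardsD1 0 S) ?S0 ?setD11.
have sum_c_in : (\sum_(i in D | H i \subset S) c i
                 = \sum_(i in D | H i \subset S) (#|H i|).-1)%N.
  apply: eq_bigr => i /andP [_ HS]; rewrite /c setIDA (setIidPl HS).
  by rewrite (cardsD1 0 (H i)) (H_closed i).1.
have sum_c_split :
    (\sum_(i in D | H i \subset S) c i + \sum_(i in M) c i <= \sum_(i in D) c i)%N.
  rewrite [X in (_ <= X)%N](bigID (fun i => H i \subset S)) leq_add //=.
  rewrite -big_condT; apply: (subset_le_big_cond leqnn (fun m n => leq_addr n m)).
  by apply/subsetP => i; rewrite inE andbT => /(subsetP M_sub).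
have S_gt0 : (0 < #|S|)%N by apply/card_gt0P; exists 0.
apply: leq_trans (subset_leq_card M_sub); move: S_gt0 sum_c_split.
by rewrite sum_c sum_c_in cardS; lia.
Qed.

Lemma card_nontrivial_parts i j : i \in D -> j \in D -> i != j ->
  (1 < #|H i|)%N -> (1 < #|H j|)%N -> (#|H i| * #|H j| < #|V|)%N ->
  (#|H i| + #|H j| + 1 <= #|[set k in D | (1 < #|H k|)%N]|)%N.
Proof.
(* Naming the part sizes identifies the differently elaborated copies of #|H i|
   that lia would otherwise treat as distinct atoms. *)
move=> Di Dj neq_ij; set a := #|H i|; set b := #|H j| => a_gt1 b_gt1 small.
have [Hi0 Hj0] := ((H_closed i).1, (H_closed j).1).
pose S := [set u.1 + u.2 | u in setX (H i) (H j)].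
have S_closed : zmod_closed S := zmod_closed_sumset (H_closed i) (H_closed j).
have HiS : H i \subset S.
  by apply/subsetP => u Hu; apply/imsetP; exists (u, 0); rewrite ?inE ?Hu ?Hj0 ?addr0.
have HjS : H j \subset S.
  by apply/subsetP => w Hw; apply/imsetP; exists (0, w); rewrite ?inE ?Hw ?Hi0 ?add0r.
have S_proper : S != [set: V].
  apply: contraTneq small => S_full; rewrite -leqNgt -cardsX -cardsT -S_full.
  exact: leq_imset_card.
have := sum_card_parts_lt S_closed S_proper.
set O := [set k in D | _]; set sumS := (\sum_(k in D | _) _)%N => O_gt.
have sumS_ge : (a.-1 + b.-1 <= sumS)%N.
  by rewrite /sumS (bigD1 i) ?Di ?HiS //= (bigD1 j) ?Dj ?HjS 1?eq_sym //= addnA leq_addr.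
have O_nontrivial : O \subset [set k in D | (1 < #|H k|)%N].
  apply/subsetP => k; rewrite !inE => /andP [-> HkS]; rewrite ltnNge.
  apply: contra HkS => /card_le1_eqP Hk_triv; apply/subsetP => u Hu.
  by rewrite -(Hk_triv _ _ Hu (H_closed k).1) S_closed.1.
have ijO_nontrivial : i |: (j |: O) \subset [set k in D | (1 < #|H k|)%N].
  by rewrite !subUset !sub1set !inE Di Dj a_gt1 b_gt1 O_nontrivial.
have := subset_leq_card ijO_nontrivial.
rewrite !cardsU1 !inE (negbTE neq_ij) HiS HjS !andbF /=; lia.
Qed.

End SubgroupPartition.

Section DotProduct.

Variable n : nat.
Implicit Types x y z b : vec n.

Lemma card_vec : #|vec n| = (2 ^ n)%N.
Proof. by rewrite card_mx card_Fp // mul1n. Qed.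

Lemma dotDl x y z : dot (x + y) z = dot x z + dot y z.
Proof. by rewrite /dot -big_split; apply: eq_bigr => i _; rewrite mxE mulrDl. Qed.

Lemma dotDr x y z : dot x (y + z) = dot x y + dot x z.
Proof. by rewrite /dot -big_split; apply: eq_bigr => i _; rewrite mxE mulrDr. Qed.

Lemma dotC x y : dot x y = dot y x.
Proof. by apply: eq_bigr => i _; rewrite mulrC. Qed.

Lemma dot0l x : dot 0 x = 0.
Proof. by rewrite /dot big1 // => i _; rewrite mxE mul0r. Qed.

Lemma dot0r x : dot x 0 = 0.
Proof. by rewrite dotC dot0l. Qed.

Lemma dot_delta_mx i x : dot (delta_mx ord0 i) x = x ord0 i.
Proof.
rewrite /dot (bigD1 i) //= big1 => [|j /negbTE neq_ji]; rewrite mxE eqxx.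
  by rewrite eqxx mul1r addr0.
by rewrite neq_ji mul0r.
Qed.

Lemma dot_ext x y : (forall b, dot b x = dot b y) -> x = y.
Proof. by move=> dot_eq; apply/rowP => i; rewrite -!dot_delta_mx dot_eq. Qed.

Lemma sum_sgn_dot x : \sum_y sgn (dot x y) = if x == 0 then (2 ^ n)%:Z else 0.
Proof.
rewrite sum_sgn_additiveT ?card_vec; last by move=> y z; rewrite dotDr.
congr (if _ then _ else _); apply/forallP/eqP => [x_orth | -> y]; last exact/eqP/dot0l.
by apply: dot_ext => b; rewrite dotC dot0r; apply/eqP.
Qed.

End DotProduct.

Section PolarForm.

Variable n : nat.
Implicit Types (x y z b : vec n) (f : vec n -> 'F_2).

Definition polar (W : zmodType) (f : vec n -> W) x y : W := f (x + y) + f x + f y + f 0.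

Lemma polarC (W : zmodType) (f : vec n -> W) x y : polar f x y = polar f y x.
Proof. by rewrite /polar [x + y]addrC (addrAC (f (y + x))). Qed.

Lemma polar_diff (W : zmodType) (f : vec n -> W) x y :
  polar f x y = (f x + f (x + y)) + (f 0 + f y).
Proof. by rewrite /polar [f (x + y) + _]addrC -addrA [f y + _]addrC. Qed.

Lemma dot_polar (F : vec n -> vec n) b x y :
  dot b (polar F x y) = polar (Defs.comp F b) x y.
Proof. by rewrite /polar !dotDr. Qed.

Lemma quadratic_plus_affine_polarDl f : quadratic_plus_affine f ->
  forall x y z, polar f (x + y) z = polar f x z + polar f y z.
Proof.
case=> A [c [d f_def]].
pose B (u v : vec n) := (u *m A *m v^T) ord0 ord0.
have BDl u v w : B (u + v) w = B u w + B v w by rewrite /B !mulmxDl mxE.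
have BDr u v w : B u (v + w) = B u v + B u w by rewrite /B linearD mulmxDr mxE.
have polarE u v : polar f u v = B u v + B v u.
  rewrite /polar !f_def -!/(B _ _) BDl !BDr dotDr dot0r.
  have -> : B 0 0 = 0 by rewrite /B !mul0mx mxE.
  by apply: (@eq_F2_mod2 _ _ (B u u + B v v + dot c u + dot c v + d + d)); ring.
by move=> x y z; rewrite !polarE BDl BDr addrACA.
Qed.

End PolarForm.

Section Radical.

Variables (n : nat) (F : vec n -> vec n).
Implicit Types (x y z a b : vec n).

Definition rad b : {set vec n} := [set a | [forall x, dot b (polar F x a) == 0]].

Lemma polar0r x : polar F x 0 = 0.
Proof. by rewrite /polar addr0 addrr_F2 add0r addrr_F2. Qed.

Lemma rad0 : rad 0 = [set: vec n].
Proof. by apply/setP => a; rewrite !inE; apply/forallP => x; rewrite dot0l. Qed.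

Lemma sum_walsh b : \sum_a walsh F b a = (2 ^ n)%:Z * sgn (Defs.comp F b 0).
Proof.
have sum_x x : \sum_a sgn (Defs.comp F b x + dot x a)
    = sgn (Defs.comp F b x) * (if x == 0 then (2 ^ n)%:Z else 0).
  by rewrite -sum_sgn_dot mulr_sumr; apply: eq_bigr => a _; rewrite sgnD.
rewrite exchange_big /= (eq_bigr _ (fun x _ => sum_x x)) (bigD1 0) // eqxx.
rewrite big1 => [|x /negbTE ->]; last by rewrite mulr0.
by rewrite /= addr0 mulrC.
Qed.

Lemma amplitude_le_linearity b : b != 0 -> (amplitude F b <= linearity F)%N.
Proof. exact: (@leq_bigmax_cond _ (fun b => b != 0) (amplitude F)). Qed.

Lemma linearity_attained b0 : b0 != 0 ->
  exists2 b, b != 0 & linearity F = amplitude F b.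
Proof.
move=> b0_neq0; have nonzero_gt0 : (0 < #|[pred b : vec n | b != 0%R]|)%N.
  by apply/card_gt0P; exists b0.
have [b b_neq0 linearity_b] := eq_bigmax_cond (amplitude F) nonzero_gt0.
by exists b.
Qed.

Hypothesis F_quad : quadratic F.

Lemma polarDl x y z : polar F (x + y) z = polar F x z + polar F y z.
Proof.
apply: dot_ext => b.
by rewrite [RHS]dotDr !dot_polar (quadratic_plus_affine_polarDl (F_quad b)).
Qed.

Lemma polarDr x y z : polar F x (y + z) = polar F x y + polar F x z.
Proof. by rewrite polarC polarDl !(polarC _ x). Qed.

Lemma rad_closed b : zmod_closed (rad b).
Proof.
split=> [|u v]; rewrite !inE; first by apply/forallP => x; rewrite polar0r dot0r.
move=> /forallP u_rad /forallP v_rad; apply/forallP => x.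
by rewrite oppr_F2 polarDr dotDr (eqP (u_rad x)) (eqP (v_rad x)) addr0.
Qed.

Lemma sum_sgn_polar b u :
  \sum_x sgn (dot b (polar F x u)) = if u \in rad b then (2 ^ n)%:Z else 0.
Proof.
rewrite sum_sgn_additiveT ?card_vec ?inE // => x y.
by rewrite polarDl dotDr.
Qed.

Lemma walsh_sqr b a : walsh F b a ^+ 2 =
  (2 ^ n)%:Z * \sum_(u in rad b) sgn (Defs.comp F b u + Defs.comp F b 0 + dot u a).
Proof.
have split_sgn x u :
    sgn (Defs.comp F b x + dot x a) * sgn (Defs.comp F b (x + u) + dot (x + u) a)
    = sgn (dot b (polar F x u)) * sgn (Defs.comp F b u + Defs.comp F b 0 + dot u a).
  rewrite -!sgnD dot_polar /polar dotDl; congr sgn.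
  by apply: (@eq_F2_mod2 _ _ (dot x a - Defs.comp F b u - Defs.comp F b 0)); ring.
rewrite expr2 /walsh mulr_suml.
under eq_bigr => x _ do rewrite mulr_sumr (reindex_inj (addrI x)) /=.
under eq_bigr => x _ do under eq_bigr => u _ do rewrite split_sgn.
rewrite exchange_big mulr_sumr [RHS]big_mkcond /=; apply: eq_bigr => u _.
by rewrite -mulr_suml sum_sgn_polar; case: ifP; rewrite ?mul0r // mulrC.
Qed.

Lemma walsh_sqr_cases b a :
  walsh F b a = 0 \/ walsh F b a ^+ 2 = (2 ^ n * #|rad b|)%:Z.
Proof.
have := walsh_sqr b a; rewrite (sum_sgn_additive (rad_closed b)); last first.
  move=> u v _; rewrite inE => /forallP /(_ u) /eqP; rewrite dot_polar => polar_uv0.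
  rewrite dotDl -[RHS]addr0 -polar_uv0 /polar.
  pose z := - (Defs.comp F b u + Defs.comp F b v + Defs.comp F b 0).
  by apply: (@eq_F2_mod2 _ _ z); rewrite /z; ring.
case: ifP => _ walsh_sqrE; last by left; apply/eqP; rewrite -sqrf_eq0 walsh_sqrE mulr0.
by right; rewrite walsh_sqrE -PoszM.
Qed.

Lemma amplitude_sqr b : (amplitude F b ^ 2 = 2 ^ n * #|rad b|)%N.
Proof.
have abs_walsh_sqr a : walsh F b a != 0 -> (`|walsh F b a| ^ 2 = 2 ^ n * #|rad b|)%N.
  move=> walsh_neq0; case: (walsh_sqr_cases b a) => [/eqP|/(congr1 absz)].
    by rewrite (negbTE walsh_neq0).
  by rewrite abszX absz_nat.
have [a0 walsh_a0] : exists a0, walsh F b a0 != 0.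
  have sum_neq0 : \sum_a walsh F b a != 0.
    rewrite sum_walsh mulf_neq0 //; first by rewrite -natz pnatr_eq0 expn_eq0.
    by rewrite /sgn; case: ifP => _; rewrite ?oppr_eq0 oner_neq0.
  case: (pickP (fun a => walsh F b a != 0)) => [a0 walsh_a0 | walsh0].
    by exists a0.
  by move: sum_neq0; rewrite big1 ?eqxx // => a _; apply/eqP/negbFE/walsh0.
rewrite -(abs_walsh_sqr a0 walsh_a0); congr (_ ^ 2)%N.
apply/eqP; rewrite eqn_leq leq_bigmax andbT; apply/bigmax_leqP => a _.
have [->|walsh_neq0] := eqVneq (walsh F b a) 0; first exact: leq0n.
by rewrite -leq_sqr !abs_walsh_sqr.
Qed.

Lemma card_rad_amplitude b m :
  (amplitude F b ^ 2 = 2 ^ (n + m))%N -> #|rad b| = (2 ^ m)%N.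
Proof.
by rewrite amplitude_sqr expnD => /eqP; rewrite eqn_pmul2l ?expn_gt0 // => /eqP.
Qed.

Lemma card_rad_mem a :
  #|[set b | a \in rad b]| = #|[set x | polar F x a == 0]|.
Proof.
(* Double counting: 2^n times either side is \sum_b \sum_x sgn <b, polar F x a>. *)
have sum_if (P : pred (vec n)) :
    \sum_y (if P y then (2 ^ n)%:Z else 0) = (2 ^ n * #|[set y | P y]|)%:Z.
  by rewrite -big_mkcond sumr_const cardsE PoszM -mulr_natr natz.
apply/eqP; rewrite -(eqn_pmul2l (expn_gt0 2 n)) -eqz_nat -!sum_if.
under eq_bigr => b _ do rewrite -sum_sgn_polar.
rewrite exchange_big; apply/eqP/eq_bigr => x _.
by rewrite -sum_sgn_dot; apply: eq_bigr => b _; rewrite dotC.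
Qed.

Lemma NF_rad : NF F = [set b in [set~ 0] | (1 < #|rad b|)%N].
Proof.
apply/setP => b; rewrite !inE /bent_comp amplitude_sqr -{2}(muln1 (2 ^ n)%N).
rewrite eqn_pmul2l ?expn_gt0 //; congr (_ && _).
have : (0 < #|rad b|)%N by apply/card_gt0P; exists 0; exact: (rad_closed b).1.
by case: #|rad b| => [|[|r]].
Qed.

Hypothesis F_APN : APN F.

Lemma card_polar_kernel a : a != 0 -> #|[set x | polar F x a == 0]| = 2%N.
Proof.
move=> a_neq0; apply/eqP; rewrite eqn_leq; apply/andP; split.
  rewrite (eq_card (B := [set x | F x + F (x + a) == F 0 + F a])) ?F_APN // => x.
  by rewrite !inE polar_diff addr_eq0 oppr_F2.
have kernel_0a : [set 0; a] \subset [set x | polar F x a == 0].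
  apply/subsetP => x; rewrite !inE => /orP [] /eqP ->; first by rewrite polarC polar0r.
  by rewrite polar_diff addrr_F2 [F 0 + _]addrC addrr_F2.
by move: (subset_leq_card kernel_0a); rewrite cards2 eq_sym a_neq0.
Qed.

Lemma rad_partition a : a != 0 -> #|[set b in [set~ 0] | a \in rad b]| = 1%N.
Proof.
move=> a_neq0; have := card_polar_kernel a_neq0.
rewrite -card_rad_mem (cardsD1 0 [set b | a \in rad b]) inE rad0 inE add1n.
move=> -[card_eq]; rewrite -[RHS]card_eq.
by apply: eq_card => b; rewrite !inE andbC.
Qed.

End Radical.

Theorem mainTheorem9 (n k l : nat) (F : 'rV['F_2]_n -> 'rV['F_2]_n) :
  ~~ odd n ->
  quadratic F -> APN F ->
  (linearity F ^ 2 = 2 ^ (n + k))%N ->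
  (exists b : 'rV['F_2]_n, (b != 0)%R /\ (amplitude F b ^ 2 = 2 ^ (n + l))%N) ->
  (2 <= l)%N -> (l < n - k)%N -> l <> k ->
  (2 ^ k + 2 ^ l + 1 <= #|NF F|)%N.
Proof.
move=> _ F_quad F_APN linearity_sqr [b0 [b0_neq0 amplitude_b0]] l_gt1 l_lt l_neq_k.
have [b1 b1_neq0 linearity_b1] := linearity_attained F b0_neq0.
have rad_b0 := card_rad_amplitude F_quad amplitude_b0.
have rad_b1 : #|rad F b1| = (2 ^ k)%N.
  by apply: (card_rad_amplitude F_quad); rewrite -linearity_b1.
have l_le_k : (l <= k)%N.
  move: (amplitude_le_linearity F b0_neq0).
  by rewrite -leq_sqr amplitude_b0 linearity_sqr leq_exp2l // leq_add2l.
have b1_neq_b0 : b1 != b0.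
  apply/eqP => b1_b0; apply: l_neq_k; apply: (@expnI 2) => //.
  by rewrite -rad_b0 -rad_b1 b1_b0.
rewrite NF_rad // -rad_b1 -rad_b0.
apply: (card_nontrivial_parts (rad_closed F_quad) (rad_partition F_quad F_APN)).
- by rewrite !inE.
- by rewrite !inE.
- exact: b1_neq_b0.
- by rewrite rad_b1 (ltn_exp2l 0); lia.
- by rewrite rad_b0 (ltn_exp2l 0); lia.
by rewrite rad_b1 rad_b0 card_vec -expnD ltn_exp2l //; lia.
Qed.
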